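(* Let $K^2$ be the Klein bottle, with $\pi_1(K^2)\cong\langle a,b\mid aba^{-1}=b^{-1}\rangle$, and let $\rho:\pi_1(K^2)\to\mathrm{SL}_2(\mathbb C)$ be a representation. Then, up to conjugation, exactly one of the following holds: (1) $\rho(b)=\pm I$ and $\rho(a)$ is arbitrary; (2) $\rho(b)=\pm\begin{pmatrix}\lambda&0\\0&\lambda^{-1}\end{pmatrix}$ with $\lambda\neq\pm1$ and $\rho(a)=\pm\begin{pmatrix}0&1\\-1&0\end{pmatrix}$; (3) $\rho(b)=\pm\begin{pmatrix}1&1\\0&1\end{pmatrix}$ and $\rho(a)=\pm\begin{pmatrix}i&0\\0&-i\end{pmatrix}$. *)

From HB Require Import structures.
From mathcomp Require Import all_boot all_order all_algebra.
From mathcomp Require Import complex.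
From mathcomp Require Import reals.
Set Implicit Arguments. Unset Strict Implicit. Unset Printing Implicit Defensive.
Import Order.TTheory GRing.Theory Num.Theory.
Local Open Scope ring_scope.

Definition mx2 {T : nmodType} (a b c d : T) : 'M[T]_2 :=
  \matrix_(i < 2, j < 2)
    if (i == 0 :> nat) then (if (j == 0 :> nat) then a else b)
    else (if (j == 0 :> nat) then c else d).

(* A pair (A, B) = (rho(a), rho(b)) of SL_2(C) matrices satisfying the
   Klein-bottle relation a b a^-1 = b^-1, i.e. a representation
   pi_1(K^2) -> SL_2(C). *)
Definition klein_rep (R : realType) (A B : 'M[R[i]]_2) : Prop :=
  \det A = 1 /\ \det B = 1 /\ A *m B *m invmx A = invmx B.

Definition mxconj (R : realType) (P M : 'M[R[i]]_2) : 'M[R[i]]_2 :=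
  P *m M *m invmx P.

Definition case1 (R : realType) (A B : 'M[R[i]]_2) : Prop :=
  B = 1%:M \/ B = - 1%:M.

Definition case2 (R : realType) (A B : 'M[R[i]]_2) : Prop :=
  exists lam : R[i], [/\ lam != 0, lam != 1, lam != -1,
    (B = mx2 lam 0 0 lam^-1 \/ B = - mx2 lam 0 0 lam^-1) &
    (A = mx2 0 1 (-1) 0 \/ A = - mx2 0 1 (-1) 0)].

Definition case3 (R : realType) (A B : 'M[R[i]]_2) : Prop :=
  (B = mx2 1 1 0 1 \/ B = - mx2 1 1 0 1) /\
  (A = mx2 'i 0 0 (- 'i) \/ A = - mx2 'i 0 0 (- 'i)).

Definition up_to_conj (R : realType)
    (C : 'M[R[i]]_2 -> 'M[R[i]]_2 -> Prop) (A B : 'M[R[i]]_2) : Prop :=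
  exists P : 'M[R[i]]_2, P \in unitmx /\ C (mxconj P A) (mxconj P B).

From HB Require Import structures.
From mathcomp Require Import all_boot all_order all_algebra.
From mathcomp Require Import complex reals.
From mathcomp Require Import ring.
Set Implicit Arguments.
Unset Strict Implicit.
Unset Printing Implicit Defensive.

Import Order.TTheory GRing.Theory Num.Theory.
Local Open Scope ring_scope.

(* The Klein relation a b a^-1 = b^-1 is equivalent to b a b = a, and both are
   stable under simultaneous conjugation.  Over C the matrix B is conjugate to
   an upper triangular [[l, x], [0, l^-1]].  If l^2 <> 1, a unipotent
   conjugation makes B diagonal; the relation then forces A to be
   antidiagonal, and a diagonal conjugation, which fixes B, turns A into
   [[0, 1], [-1, 0]].  If l = +-1 then either x = 0 and B = +-I, or the
   relation forces A = [[m, y], [0, -m]] with m^2 = -1, and one upper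
   triangular conjugation brings the pair to the normal form of case (3).
   The cases are separated by conjugation invariants: B = +-I is central, and
   (tr B)^2 equals 4 in case (3) but (l + l^-1)^2 <> 4 in case (2). *)

Lemma mx2E (T : nmodType) (M : 'M[T]_2) :
  M = mx2 (M 0 0) (M 0 1) (M 1 0) (M 1 1).
Proof.
apply/matrixP => i j; rewrite !mxE.
by case: i j => [[|[|i]] ?] [[|[|j]] ?] //=; congr (M _ _); apply/val_inj.
Qed.

Lemma mx2P (T : nmodType) (a b c d a' b' c' d' : T) :
  mx2 a b c d = mx2 a' b' c' d' <-> [/\ a = a', b = b', c = c' & d = d'].
Proof.
split=> [/matrixP eq_ad | [-> -> -> ->] //].
by have := eq_ad 0 0; have := eq_ad 0 1; have := eq_ad 1 0; have := eq_ad 1 1;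
  rewrite !mxE.
Qed.

Lemma mx2N (T : zmodType) (a b c d : T) :
  - mx2 a b c d = mx2 (- a) (- b) (- c) (- d).
Proof. by rewrite [LHS]mx2E !mxE. Qed.

Lemma scalar_mx2 (T : pzRingType) (x : T) : x%:M = mx2 x 0 0 x.
Proof. by rewrite [LHS]mx2E !mxE. Qed.

Lemma mulmx2 (T : pzRingType) (a b c d a' b' c' d' : T) :
  mx2 a b c d *m mx2 a' b' c' d' =
  mx2 (a * a' + b * c') (a * b' + b * d') (c * a' + d * c') (c * b' + d * d').
Proof. by rewrite [LHS]mx2E !mxE !big_ord_recr !big_ord0 !mxE /= !add0r. Qed.

Lemma det_mx2 (T : comPzRingType) (a b c d : T) :
  \det (mx2 a b c d) = a * d - b * c.
Proof.
rewrite (expand_det_row _ 0) !big_ord_recl big_ord0 /cofactor !det_mx11 !mxE /=.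
by rewrite /bump /= expr0 expr1; ring.
Qed.

Lemma mxtrace_mx2 (T : pzRingType) (a b c d : T) : \tr (mx2 a b c d) = a + d.
Proof. by rewrite /mxtrace !big_ord_recr big_ord0 /= !mxE add0r. Qed.

Lemma unitmx_mx2 (T : comUnitRingType) (a b c d : T) :
  (mx2 a b c d \in unitmx) = (a * d - b * c \is a GRing.unit).
Proof. by rewrite unitmxE det_mx2. Qed.

Lemma invmx_mx2 (T : comUnitRingType) (a b c d : T) : a * d - b * c = 1 ->
  invmx (mx2 a b c d) = mx2 d (- b) (- c) a.
Proof.
move=> det1; have inv_r : mx2 a b c d *m mx2 d (- b) (- c) a = 1%:M.
  by rewrite mulmx2 scalar_mx2; apply/mx2P; split; rewrite -?det1; ring.
have [unit_l _] := mulmx1_unit inv_r.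
by rewrite -[RHS](mulKmx unit_l) inv_r mulmx1.
Qed.

Lemma conjmx_intertwined (T : comUnitRingType) n (P M N : 'M[T]_n) :
  P \in unitmx -> P *m M = N *m P -> P *m M *m invmx P = N.
Proof. by move=> uP ->; rewrite mulmxK. Qed.

Lemma pm_sqr_entry (T : pzRingType) m n (M N : 'M[T]_(m, n)) i j :
  M = N \/ M = - N -> M i j ^+ 2 = N i j ^+ 2.
Proof. by case=> ->; rewrite ?mxE ?sqrrN. Qed.

Lemma pm_sqr_mxtrace (T : pzRingType) n (M N : 'M[T]_n) :
  M = N \/ M = - N -> \tr M ^+ 2 = \tr N ^+ 2.
Proof. by case=> ->; rewrite ?linearN ?sqrrN. Qed.

Lemma closed_quadratic_root (F : closedFieldType) (a b c : F) : a != 0 ->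
  exists x, a * x ^+ 2 + b * x + c = 0.
Proof.
move=> a_neq0.
have [x root_x] := @solve_monicpoly F 2 (nth 0 [:: - c / a; - b / a]) isT.
exists x; move: root_x.
rewrite !big_ord_recr big_ord0 /= expr0 expr1 add0r => root_x.
by rewrite root_x; field.
Qed.

Lemma triangularize (F : closedFieldType) (M : 'M[F]_2) :
  exists2 P : 'M[F]_2, P \in unitmx & (P *m M *m invmx P) 1 0 = 0.
Proof.
rewrite [M]mx2E; move: (M 0 0) (M 0 1) (M 1 0) (M 1 1) => a b c d.
have [->|b_neq0] := eqVneq b 0.
  have uJ : @mx2 F 0 1 (-1) 0 \in unitmx.
    by rewrite unitmx_mx2 mul0r sub0r mul1r opprK unitr1.
  exists (mx2 0 1 (-1) 0) => //.
  rewrite (conjmx_intertwined (N := mx2 d (- c) 0 a)) ?mxE //.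
  by rewrite !mulmx2; apply/mx2P; split; ring.
have [y root_y] := closed_quadratic_root (d - a) (- c) b_neq0.
have uP : @mx2 F 1 0 y 1 \in unitmx.
  by rewrite unitmx_mx2 mul1r mul0r subr0 unitr1.
exists (mx2 1 0 y 1) => //.
rewrite (conjmx_intertwined (N := mx2 (a - b * y) b 0 (y * b + d))) ?mxE //.
rewrite !mulmx2; apply/mx2P; split; try ring.
by rewrite mul0r add0r -[LHS]addr0 -root_y; ring.
Qed.

Section KleinBottle.

Variable R : realType.
Local Notation C := R[i].
Implicit Types (A B M N P Q : 'M[C]_2).

Lemma mxconjM P M N : P \in unitmx ->
  mxconj P (M *m N) = mxconj P M *m mxconj P N.
Proof. by move=> uP; rewrite /mxconj !mulmxA mulmxKV. Qed.

Lemma mxconjN P M : mxconj P (- M) = - mxconj P M.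
Proof. by rewrite /mxconj mulmxN mulNmx. Qed.

Lemma mxconj_scalar P (a : C) : P \in unitmx -> mxconj P a%:M = a%:M.
Proof. by move=> uP; rewrite /mxconj scalar_mxC -mulmxA mulmxV // mulmx1. Qed.

Lemma mxconj_comp P Q M : P \in unitmx -> Q \in unitmx ->
  mxconj (Q *m P) M = mxconj Q (mxconj P M).
Proof.
move=> uP uQ; apply: conjmx_intertwined; first by rewrite unitmx_mul uQ.
by rewrite /mxconj !mulmxA !mulmxKV.
Qed.

Lemma mxconjK P : P \in unitmx -> cancel (mxconj P) (mxconj (invmx P)).
Proof.
by move=> uP M; rewrite /mxconj invmxK !mulmxA mulVmx // mul1mx mulmxKV.
Qed.

Lemma det_mxconj P M : P \in unitmx -> \det (mxconj P M) = \det M.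
Proof.
rewrite unitmxE => udP.
by rewrite /mxconj !det_mulmx det_inv mulrAC mulrV ?mul1r.
Qed.

Lemma mxtrace_mxconj P M : P \in unitmx -> \tr (mxconj P M) = \tr M.
Proof. by move=> uP; rewrite /mxconj mxtrace_mulC mulmxA mulVmx // mul1mx. Qed.

Lemma up_to_conj_conj (Cs : 'M[C]_2 -> 'M[C]_2 -> Prop) P A B : P \in unitmx ->
  up_to_conj Cs (mxconj P A) (mxconj P B) -> up_to_conj Cs A B.
Proof.
move=> uP [Q [uQ CsQ]]; exists (Q *m P); split; first by rewrite unitmx_mul uQ.
by rewrite !mxconj_comp.
Qed.

Lemma klein_rep_mulmx A B : klein_rep A B -> A *m B = invmx B *m A.
Proof. by case=> dA [_ rel]; rewrite -rel mulmxKV // unitmxE dA unitr1. Qed.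

Lemma klein_repE A B :
  klein_rep A B <-> [/\ \det A = 1, \det B = 1 & B *m A *m B = A].
Proof.
have unit_det1 M : \det M = 1 -> M \in unitmx.
  by move=> dM; rewrite unitmxE dM unitr1.
split=> [kAB | [dA dB rel]].
  have [dA [dB _]] := kAB; split=> //.
  by rewrite -mulmxA (klein_rep_mulmx kAB) mulKVmx // unit_det1.
have AB : A *m B = invmx B *m A.
  by rewrite -{2}rel !mulmxA mulVmx ?mul1mx // unit_det1.
by do 2!split=> //; rewrite AB mulmxK // unit_det1.
Qed.

Lemma klein_rep_conj P A B : P \in unitmx ->
  klein_rep A B -> klein_rep (mxconj P A) (mxconj P B).
Proof.
move=> uP /klein_repE[dA dB rel]; apply/klein_repE.
by split; rewrite ?det_mxconj // -!mxconjM // rel.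
Qed.

Lemma klein_rep_diag_case2 A (l : C) : l != 0 -> l ^+ 2 != 1 ->
  klein_rep A (mx2 l 0 0 l^-1) -> up_to_conj (@case2 R) A (mx2 l 0 0 l^-1).
Proof.
move=> l_neq0 l2_neq1 kAB; have AB := klein_rep_mulmx kAB.
rewrite invmx_mx2 ?mulr0 ?subr0 ?mulfV // !oppr0 in AB.
case: kAB AB => + _; rewrite [A]mx2E.
move: (A 0 0) (A 0 1) (A 1 0) (A 1 1) => a b c d.
rewrite det_mx2 !mulmx2 !(mulr0, mul0r, addr0, add0r) => detA /mx2P[e1 _ _ e4].
have l_neq_inv : l != l^-1.
  by apply: contraNneq l2_neq1 => l_inv; rewrite expr2 {2}l_inv mulfV.
have twisted0 (y u v : C) : u != v -> y * u = v * y -> y = 0.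
  move=> u_neq_v yu; have : y * (u - v) = 0 by rewrite mulrBr yu mulrC subrr.
  by move/eqP; rewrite mulf_eq0 subr_eq0 (negbTE u_neq_v) orbF => /eqP.
have a0 : a = 0 by apply: twisted0 e1.
have d0 : d = 0 by apply: twisted0 e4; rewrite eq_sym.
have bc : b * c = -1 by rewrite -detA a0 d0; ring.
have b_neq0 : b != 0.
  by apply/eqP => b0; move/eqP: bc; rewrite b0 mul0r eq_sym oppr_eq0 oner_eq0.
have uP : @mx2 C 1 0 0 b \in unitmx.
  by rewrite unitmx_mx2 mul1r mulr0 subr0 unitfE.
exists (mx2 1 0 0 b); split => //; exists l.
move: l2_neq1; rewrite sqrf_eq1 negb_or => /andP[l_neq1 l_neqN1].
split=> //; left; apply: conjmx_intertwined => //.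
  by rewrite !mulmx2; apply/mx2P; split; ring.
by rewrite a0 d0 !mulmx2; apply/mx2P; split; rewrite ?bc; ring.
Qed.

Lemma klein_rep_unipotent_case3 A (l x : C) : l ^+ 2 = 1 -> x != 0 ->
  klein_rep A (mx2 l x 0 l) -> up_to_conj (@case3 R) A (mx2 l x 0 l).
Proof.
move=> l2 x_neq0 kAB; have AB := klein_rep_mulmx kAB.
rewrite invmx_mx2 ?mulr0 ?subr0 -?expr2 // oppr0 in AB.
case: kAB AB => + _; rewrite [A]mx2E.
move: (A 0 0) (A 0 1) (A 1 0) (A 1 1) => a b c d.
rewrite det_mx2 !mulmx2 => detA /mx2P[e1 e2 _ _].
have defect (u v : C) : u = v -> u - v = 0 by move->; rewrite subrr.
have /eqP : x * c = 0 by rewrite -(defect _ _ e1); ring.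
rewrite mulf_eq0 (negbTE x_neq0) => /eqP c0.
have /eqP : x * (a + d) = 0 by rewrite -(defect _ _ e2); ring.
rewrite mulf_eq0 (negbTE x_neq0) addrC addr_eq0 => /eqP d_eq.
subst c d; have /eqP : a ^+ 2 = 'i ^+ 2 by rewrite sqrCi -detA; ring.
rewrite eqf_sqr => a_pm_i.
have a_neq0 : a != 0 by case/orP: a_pm_i => /eqP->; rewrite ?oppr_eq0 neq0Ci.
have two_neq0 : (2 : C) != 0 by rewrite pnatr_eq0.
have l_neq0 : l != 0.
  by apply/eqP => l0; move/eqP: l2; rewrite l0 expr0n eq_sym oner_eq0.
(* [q] makes the conjugate of A diagonal: its (0, 1) entry is l b - 2 a q. *)
set q := l * b / (2 * a).
have uP : mx2 l q 0 x \in unitmx.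
  by rewrite unitmx_mx2 mulr0 subr0 unitfE mulf_neq0.
exists (mx2 l q 0 x); split=> //; split.
  rewrite /mxconj (conjmx_intertwined (N := mx2 l l 0 l)) //; last first.
    by rewrite !mulmx2; apply/mx2P; split; ring.
  move/eqP: l2; rewrite sqrf_eq1 => /orP[]/eqP->; [left | right] => //.
  by rewrite mx2N oppr0.
rewrite /mxconj (conjmx_intertwined (N := mx2 a 0 0 (- a))) //; last first.
  by rewrite !mulmx2; apply/mx2P; split; rewrite /q; field.
by case/orP: a_pm_i => /eqP->; [left | right]; rewrite // mx2N oppr0.
Qed.

Lemma klein_rep_upper_triangular A B : klein_rep A B -> B 1 0 = 0 ->
  [\/ up_to_conj (@case1 R) A B, up_to_conj (@case2 R) A B
    | up_to_conj (@case3 R) A B].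
Proof.
move=> kAB B10; have [_ [+ _]] := kAB.
move: kAB; rewrite [B]mx2E B10; move: (B 0 0) (B 0 1) (B 1 1) => l x m kAB.
rewrite det_mx2 mulr0 subr0 => lm1.
have l_neq0 : l != 0 by rewrite -unitfE; apply/unitrPr; exists m.
rewrite -(mulr1_eq lm1) in kAB *.
have [l2|l2_neq1] := eqVneq (l ^+ 2) 1.
  have l_inv : l^-1 = l by apply: mulr1_eq; rewrite -expr2.
  rewrite l_inv in kAB *.
  have [x0|x_neq0] := eqVneq x 0; last first.
    by apply: Or33; apply: klein_rep_unipotent_case3.
  apply: Or31; exists 1%:M; split; first exact: unitmx1.
  rewrite /case1 /mxconj invmx1 mul1mx mulmx1 x0 scalar_mx2 mx2N oppr0.
  by move/eqP: l2; rewrite sqrf_eq1 => /orP[]/eqP->; [left | right].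
apply: Or32.
have l2_sub_neq0 : l * l - 1 != 0 by rewrite -expr2 subr_eq0.
set U := mx2 1 (l * x / (l * l - 1)) 0 1.
have uU : U \in unitmx by rewrite unitmx_mx2 mulr1 mulr0 subr0 unitr1.
have diagB : mxconj U (mx2 l x 0 l^-1) = mx2 l 0 0 l^-1.
  apply: conjmx_intertwined => //; rewrite !mulmx2; apply/mx2P.
  by split; field; rewrite ?l_neq0 ?l2_sub_neq0.
apply: (up_to_conj_conj (Cs := @case2 R) uU); rewrite diagB.
by apply: klein_rep_diag_case2; rewrite // -diagB; apply: klein_rep_conj.
Qed.

Lemma case1_conj P A B : P \in unitmx ->
  case1 A B -> case1 (mxconj P A) (mxconj P B).
Proof.
by move=> uP [->|->]; rewrite ?mxconjN mxconj_scalar //; [left | right].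
Qed.

Lemma up_to_conj_case1 A B : up_to_conj (@case1 R) A B -> case1 A B.
Proof.
case=> P [uP]; have uP' : invmx P \in unitmx by rewrite unitmx_inv.
by move/(case1_conj uP'); rewrite !mxconjK.
Qed.

Lemma case2_not_case1 A B : case2 A B -> ~ case1 A B.
Proof.
case=> l [_ l_neq1 l_neqN1 B2 _] /(pm_sqr_entry 0 0).
rewrite (pm_sqr_entry 0 0 B2) !mxE /= expr1n => /eqP.
by rewrite sqrf_eq1 (negbTE l_neq1) (negbTE l_neqN1).
Qed.

Lemma case3_not_case1 A B : case3 A B -> ~ case1 A B.
Proof.
case=> B3 _ /(pm_sqr_entry 0 1).
rewrite (pm_sqr_entry 0 1 B3) !mxE /= expr1n expr0n => /eqP.
by rewrite oner_eq0.
Qed.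

Lemma case2_sqr_mxtrace A B : case2 A B -> \tr B ^+ 2 != 4.
Proof.
case=> l [l_neq0 l_neq1 l_neqN1 /pm_sqr_mxtrace-> _]; rewrite mxtrace_mx2.
have sqr_diff : (l - l^-1) ^+ 2 = (l + l^-1) ^+ 2 - 4 by field.
apply/eqP => tr4; move/eqP: sqr_diff.
rewrite tr4 subrr expf_eq0 subr_eq0 => /eqP l_inv.
move/eqP: (mulfV l_neq0); rewrite -l_inv -expr2 sqrf_eq1.
by rewrite (negbTE l_neq1) (negbTE l_neqN1).
Qed.

Lemma case3_sqr_mxtrace A B : case3 A B -> \tr B ^+ 2 = 4.
Proof. by case=> /pm_sqr_mxtrace-> _; rewrite mxtrace_mx2; ring. Qed.

End KleinBottle.

Theorem lemma4p1 (R : realType) (A B : 'M[R[i]]_2) :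
  klein_rep A B ->
  let c1 := up_to_conj (@case1 R) A B in
  let c2 := up_to_conj (@case2 R) A B in
  let c3 := up_to_conj (@case3 R) A B in
  (c1 \/ c2 \/ c3) /\ ~ (c1 /\ c2) /\ ~ (c1 /\ c3) /\ ~ (c2 /\ c3).
Proof.
move=> kAB c1 c2 c3; split; [|split; [|split]].
- have [P uP lowB] := triangularize B.
  have [] := klein_rep_upper_triangular (klein_rep_conj uP kAB) lowB;
    move/(up_to_conj_conj uP); tauto.
- move=> [/up_to_conj_case1 B1 [P [uP /case2_not_case1]]].
  by apply; apply: case1_conj.
- move=> [/up_to_conj_case1 B1 [P [uP /case3_not_case1]]].
  by apply; apply: case1_conj.
- move=> [[P [uP c2P]] [Q [uQ c3Q]]].
  have := case2_sqr_mxtrace c2P; rewrite mxtrace_mxconj //.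
  by rewrite -(mxtrace_mxconj B uQ) (case3_sqr_mxtrace c3Q) eqxx.
Qed.
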